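(* Let $n,t\ge1$ and $b\ge1$. Then \[ N_{2,b}^+(n,t)=2^{b}\,I_{2,b}(n,t-1)=2^{t(b-1)+1}\sum_{i=0}^{t-1}\binom{n+t-1}{i}. \]
   Context: $\Sigma_2=\{0,1\}$. A $b$-burst-insertion at position $i\in[1,n+1]$ transforms $x_1\cdots x_n$ into $x_1\cdots x_{i-1}y_1\cdots y_b x_i\cdots x_n$ for arbitrary $y_1\cdots y_b\in\Sigma_2^b$. $\mathcal{I}_{t,b}(\boldsymbol{x})$ is the set of all length-$(n+tb)$ sequences obtainable from $\boldsymbol{x}$ by $t$ successive $b$-burst-insertions ($\mathcal{I}_{0,b}(\boldsymbol{x})=\{\boldsymbol{x}\}$). $I_{2,b}(n,t)=\max\{|\mathcal{I}_{t,b}(\boldsymbol{x})|:\boldsymbol{x}\in\Sigma_2^n\}$ and $N_{2,b}^+(n,t)=\max\{|\mathcal{I}_{t,b}(\boldsymbol{x})\cap\mathcal{I}_{t,b}(\boldsymbol{y})|:\boldsymbol{x}\ne\boldsymbol{y}\in\Sigma_2^n\}$. Convention: $\binom{m}{i}=0$ if $m<i$. *)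

From mathcomp Require Import all_boot.
Set Implicit Arguments. Unset Strict Implicit. Unset Printing Implicit Defensive.

(* All results of ONE b-burst-insertion into x: insert an arbitrary word
   y of length b after the first i symbols of x, for i = 0..size x
   (i.e. at position i+1 in [1, n+1] in the paper's 1-based indexing). *)
Definition burst_ins (b : nat) (x : seq bool) : seq (seq bool) :=
  [seq take i x ++ val y ++ drop i x
     | i <- iota 0 (size x).+1, y <- enum {: b.-tuple bool}].

Definition Iset (t b : nat) (x : seq bool) : seq (seq bool) :=
  iter t (fun S => undup (flatten (map (burst_ins b) S))) [:: x].

Definition Icard (t b : nat) (x : seq bool) : nat := size (undup (Iset t b x)).

Definition Iinter (t b : nat) (x y : seq bool) : nat :=
  size (undup [seq z <- Iset t b x | z \in Iset t b y]).

Definition I2 (b n t : nat) : nat :=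
  \max_(x : n.-tuple bool) Icard t b x.

Definition N2plus (b n t : nat) : nat :=
  \max_(x : n.-tuple bool) \max_(y : n.-tuple bool | x != y) Iinter t b x y.

From mathcomp Require Import all_boot zify.
Set Implicit Arguments. Unset Strict Implicit. Unset Printing Implicit Defensive.

(* The words of I_{t+1}(a x) beginning with a are exactly a I_{t+1}(x); those
   beginning with ~a are ~a Sigma^(b-1) I_t(a x), since that first symbol must
   come from a burst inserted in front of a.  This yields a duplicate-free
   enumeration of I_t(x) and the recursion
   |I_{t+1}(a x)| = |I_{t+1}(x)| + 2^(b-1) |I_t(a x)|, solved by Pascal's rule
   as 2^(t(b-1)) sum_(i<=t) C(n+t, i).  Running the same recursion on two
   distinct words of equal length bounds their intersection by
   2^b |I_{t-1}|: when the first symbols agree the bound propagates, and when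
   they differ each half of I_t(a x) meets I_t(~a y) in at most
   2^(b-1) |I_{t-1}| words.  For x = 1 0^(n-1), y = 0^n both halves
   ~a Sigma^(b-1) I_{t-1}(a 0^(n-1)), a = 0, 1, lie in the intersection. *)

Definition is_burst_ins (b : nat) (v z : seq bool) :=
  exists p s y, [/\ v = p ++ s, size y = b & z = p ++ y ++ s].

Lemma mem_burst_ins b v z : z \in burst_ins b v <-> is_burst_ins b v z.
Proof.
split.
- case/allpairsP => [[i y] /= [Hi _ ->]].
  exists (take i v), (drop i v), (val y); split => //; first by rewrite cat_take_drop.
  by rewrite size_tuple.
- case=> p [s [y [-> Hy ->]]].
  apply/allpairsP; exists (size p, Tuple (introT eqP Hy)); split.
  + change (size p \in iota 0 (size (p ++ s)).+1).
    by rewrite mem_iota add0n ltnS size_cat leq_addr.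
  + by rewrite /= mem_enum.
  + by rewrite /= take_size_cat // drop_size_cat.
Qed.

Lemma eq_cat_levi (T : Type) (p s w u : seq T) : p ++ s = w ++ u ->
  (exists q, p = w ++ q /\ u = q ++ s) \/ (exists r, w = p ++ r /\ s = r ++ u).
Proof.
elim: p w => [|d p IH] w /=; first by move=> ->; right; exists w.
case: w => [|e w] /=; first by move=> <-; left; exists (d :: p).
case=> -> /IH [[q [-> ->]]|[r [-> ->]]]; [left; by exists q | right; by exists r].
Qed.

Lemma is_burst_ins_cat b w u z : is_burst_ins b (w ++ u) z ->
  (exists z', z = w ++ z' /\ is_burst_ins b u z') \/
  (exists w', z = w' ++ u /\ size w' = size w + b).
Proof.
case=> p [s [y [/esym/eq_cat_levi [[q [-> ->]]|[r [-> ->]]] Hy ->]]].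
- by left; exists (q ++ y ++ s); split; [rewrite -catA | exists q, s, y].
- right; exists (p ++ y ++ r); split; first by rewrite -!catA.
  by rewrite !size_cat Hy; lia.
Qed.

Lemma is_burst_ins_cons b c v z : 0 < b -> is_burst_ins b v (c :: z) ->
  (exists2 w, size w = b.-1 & z = w ++ v) \/
  (exists2 v', v = c :: v' & is_burst_ins b v' z).
Proof.
move=> b0 [[|d p] [s [y [-> Hy Ez]]]].
- case: y Hy Ez b0 => [<- //|c' w] /= Hy [_ ->] _.
  by left; exists w; rewrite -?Hy.
- case: Ez => <- ->; right; exists (p ++ s) => //.
  by exists p, s, y.
Qed.

Lemma mem_Iset0 b x z : (z \in Iset 0 b x) = (z == x).
Proof. by rewrite /Iset /= mem_seq1. Qed.

Lemma mem_IsetS t b x z :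
  z \in Iset t.+1 b x <-> exists2 v, v \in Iset t b x & is_burst_ins b v z.
Proof.
rewrite /Iset iterS mem_undup; split.
- case/flattenP => s /mapP [v Hv ->] Hz; exists v => //; exact/mem_burst_ins.
- case=> v Hv /mem_burst_ins Hz; apply/flattenP; exists (burst_ins b v) => //.
  exact: map_f.
Qed.

Lemma size_Iset t b x z : z \in Iset t b x -> size z = size x + t * b.
Proof.
elim: t z => [|t IH] z; first by rewrite mem_Iset0 => /eqP ->; rewrite addn0.
case/mem_IsetS => v /IH Hv [p [s [y [Ev Hy ->]]]].
move: Hv; rewrite Ev !size_cat Hy mulSn; lia.
Qed.

Lemma Iset_add r s b x v z :
  v \in Iset r b x -> z \in Iset s b v -> z \in Iset (r + s) b x.
Proof.
move=> Hv; elim: s z => [|s IH] z; first by rewrite mem_Iset0 addn0 => /eqP ->.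
by case/mem_IsetS => u /IH Hu Hz; rewrite addnS; apply/mem_IsetS; exists u.
Qed.

Lemma mem_Iset_catl t b w x z : z \in Iset t b x -> w ++ z \in Iset t b (w ++ x).
Proof.
elim: t z => [|t IH] z; first by rewrite !mem_Iset0 => /eqP ->.
case/mem_IsetS => v /IH Hv [p [s [y [Ev Hy ->]]]].
apply/mem_IsetS; exists (w ++ v) => //.
by exists (w ++ p), s, y; rewrite Ev !catA.
Qed.

Lemma mem_Iset1_catr b v y : size y = b -> y ++ v \in Iset 1 b v.
Proof.
by move=> Hy; apply/mem_IsetS; exists v; [rewrite mem_Iset0 | exists [::], v, y].
Qed.

(* [w ++ [:: a]] is a burst of length [b] inserted in front of [x]. *)
Lemma cat_mem_IsetS_cons s b a x w u : 0 < b -> size w = b.-1 ->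
  u \in Iset s b (a :: x) -> w ++ u \in Iset s.+1 b x.
Proof.
move=> b0 Hw Hu; rewrite -add1n; apply: (Iset_add (v := w ++ a :: x)).
  by rewrite -cat1s catA; apply: mem_Iset1_catr; rewrite size_cat Hw /=; lia.
exact: mem_Iset_catl.
Qed.

Lemma mem_Iset_nil t b z : (z \in Iset t b [::]) = (size z == t * b).
Proof.
apply/idP/eqP; first by move/size_Iset.
elim: t z => [|t IH] z; first by rewrite mul0n => /size0nil ->; rewrite mem_Iset0.
move=> Hz; rewrite -(cat_take_drop b z) -addn1.
apply: (Iset_add (v := drop b z)); first by apply: IH; rewrite size_drop Hz mulSn addKn.
by apply: mem_Iset1_catr; rewrite size_takel // Hz mulSn leq_addr.
Qed.

Lemma mem_Iset_cons t b a x z : 0 < b ->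
  (a :: z \in Iset t b (a :: x)) = (z \in Iset t b x).
Proof.
move=> b0; apply/idP/idP; last exact: (@mem_Iset_catl t b [:: a]).
elim: t z => [|t IH] z; first by rewrite !mem_Iset0 eqseq_cons eqxx.
case/mem_IsetS => v Hv /(is_burst_ins_cons b0) [[w Hw ->]|[v' Ev Hz]].
  exact: cat_mem_IsetS_cons Hv.
by apply/mem_IsetS; exists v'; [apply: IH; rewrite -Ev | ].
Qed.

Lemma is_burst_ins_after_prefix s b x w u z : size w = b.-1 ->
  u \in Iset s b x -> is_burst_ins b (w ++ u) z ->
  exists w' u', [/\ size w' = b.-1, u' \in Iset s.+1 b x & z = w' ++ u'].
Proof.
move=> Hw Hu /is_burst_ins_cat [[z' [-> Hz']]|[w' [-> Hw']]].
  by exists w, z'; split => //; apply/mem_IsetS; exists u.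
exists (take b.-1 w'), (drop b.-1 w' ++ u); split.
- by rewrite size_takel // Hw' Hw leq_addr.
- rewrite -addn1; apply: (Iset_add Hu); apply: mem_Iset1_catr.
  rewrite size_drop Hw' Hw; lia.
- by rewrite catA cat_take_drop.
Qed.

Lemma mem_IsetS_flip_cons t b a x z : 0 < b ->
  ~~ a :: z \in Iset t.+1 b (a :: x) <->
  exists w u, [/\ size w = b.-1, u \in Iset t b (a :: x) & z = w ++ u].
Proof.
move=> b0; split; last first.
  case=> w [u [Hw Hu ->]]; apply/mem_IsetS; exists u => //.
  by exists [::], u, (~~ a :: w); split => //=; rewrite Hw; lia.
elim: t z => [|t IH] z
  /mem_IsetS [v Hv /(is_burst_ins_cons b0) [[w Hw ->]|[v' Ev Hz]]];
  try by exists w, v.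
- by move: Hv; rewrite Ev mem_Iset0 eqseq_cons; case: (a).
- move: Hv; rewrite Ev => /IH [w [u [Hw Hu Ev']]].
  by apply: (is_burst_ins_after_prefix Hw Hu); rewrite -Ev'.
Qed.

Definition words (m : nat) : seq (seq bool) := [seq val w | w <- enum {: m.-tuple bool}].

Lemma mem_words m w : (w \in words m) = (size w == m).
Proof.
apply/mapP/eqP => [[u _ ->]|Hw]; first exact: size_tuple.
by exists (Tuple (introT eqP Hw)); rewrite ?mem_enum.
Qed.

Lemma uniq_words m : uniq (words m).
Proof. by rewrite (map_inj_uniq val_inj) enum_uniq. Qed.

Lemma size_words m : size (words m) = 2 ^ m.
Proof. by rewrite size_map -cardE card_tuple card_bool. Qed.

Definition burst_prefix (b : nat) (c : bool) (S : seq (seq bool)) : seq (seq bool) :=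
  [seq c :: w ++ u | w <- words b.-1, u <- S].

Lemma mem_burst_prefix b c S z :
  z \in burst_prefix b c S <->
  exists w u, [/\ size w = b.-1, u \in S & z = c :: w ++ u].
Proof.
split => [/allpairsP [[w u] /= [Hw Hu ->]]|[w [u [Hw Hu ->]]]].
  by exists w, u; split => //; apply/eqP; rewrite -mem_words.
by apply/allpairsP; exists (w, u); rewrite mem_words Hw.
Qed.

Lemma mem_burst_prefix_cat b c c' S w u : size w = b.-1 ->
  (c' :: w ++ u \in burst_prefix b c S) = (c' == c) && (u \in S).
Proof.
move=> Hw; apply/idP/andP => [/mem_burst_prefix [w' [u' [Hw' Hu' [-> E]]]]|].
  by move/eqP: E; rewrite eqseq_cat ?Hw ?Hw' // => /andP [_ /eqP ->].
by case=> /eqP -> Hu; apply/mem_burst_prefix; exists w, u.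
Qed.

Lemma head_burst_prefix b c S c' z : c' :: z \in burst_prefix b c S -> c' = c.
Proof. by case/mem_burst_prefix => w [u [_ _ [->]]]. Qed.

Lemma nil_notin_burst_prefix b c S : [::] \notin burst_prefix b c S.
Proof. by apply/negP => /mem_burst_prefix [w [u [_ _]]]. Qed.

Lemma uniq_burst_prefix b c S : uniq S -> uniq (burst_prefix b c S).
Proof.
move=> US; apply: allpairs_uniq => //; first exact: uniq_words.
move=> [w1 u1] [w2 u2] /allpairsP [[w1' u1'] /= [Hw1 _ [-> ->]]].
move=> /allpairsP [[w2' u2'] /= [Hw2 _ [-> ->]]] /= [/eqP].
move: Hw1 Hw2; rewrite !mem_words => /eqP Hw1 /eqP Hw2.
by rewrite eqseq_cat ?Hw1 ?Hw2 // => /andP [/eqP -> /eqP ->].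
Qed.

Lemma size_burst_prefix b c S : size (burst_prefix b c S) = 2 ^ b.-1 * size S.
Proof. by rewrite size_allpairs size_words. Qed.

Lemma count_burst_prefix b c S (P Q : pred (seq bool)) :
  (forall w u, size w = b.-1 -> P (c :: w ++ u) = Q u) ->
  count P (burst_prefix b c S) = 2 ^ b.-1 * count Q S.
Proof.
move=> PQ; rewrite -size_words /burst_prefix.
have : all (fun w => size w == b.-1) (words b.-1) by apply/allP => w; rewrite mem_words.
elim: (words b.-1) => //= w ws IH /andP [/eqP Hw /IH {}IH].
by rewrite count_cat IH count_map mulSn; congr (_ + _); apply: eq_count => u /=; apply: PQ.
Qed.

Fixpoint Ienum (b : nat) (x : seq bool) (t : nat) : seq (seq bool) :=
  if x is a :: x' then
    (fix Ienum_cons t := if t is t'.+1 then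
       map (cons a) (Ienum b x' t) ++ burst_prefix b (~~ a) (Ienum_cons t')
     else [:: x]) t
  else words (t * b).

Lemma words0 : words 0 = [:: [::]].
Proof.
case E: (words 0) (size_words 0) => [|w [|]] //= _.
by rewrite (size0nil (_ : size w = 0)) //; apply/eqP; rewrite -mem_words E mem_seq1.
Qed.

Lemma Ienum0 b x : Ienum b x 0 = [:: x].
Proof. by case: x => //=; rewrite words0. Qed.

Lemma IenumS b a x t : Ienum b (a :: x) t.+1 =
  map (cons a) (Ienum b x t.+1) ++ burst_prefix b (~~ a) (Ienum b (a :: x) t).
Proof. by []. Qed.

Lemma cons_inj (T : Type) (a : T) : injective (cons a).
Proof. by move=> u v [->]. Qed.

Lemma mem_IenumS_cons b a x t z :
  (a :: z \in Ienum b (a :: x) t.+1) = (z \in Ienum b x t.+1).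
Proof.
rewrite IenumS mem_cat (mem_map (@cons_inj _ a)).
by case: (boolP (_ \in burst_prefix _ _ _)) => [/head_burst_prefix|]; rewrite ?orbF //; case: (a).
Qed.

Lemma mem_IenumS_flip b a x t w u : size w = b.-1 ->
  (~~ a :: w ++ u \in Ienum b (a :: x) t.+1) = (u \in Ienum b (a :: x) t).
Proof.
move=> Hw; rewrite IenumS mem_cat mem_burst_prefix_cat // eqxx.
by case: (boolP (_ \in map _ _)) => [/mapP [v _ []]|]; case: (a).
Qed.

Lemma mem_Ienum b x t z : 0 < b -> (z \in Ienum b x t) = (z \in Iset t b x).
Proof.
move=> b0; elim: x t z => [|a x IHx] t z; first by rewrite mem_words mem_Iset_nil.
elim: t z => [|t IHt] z; first by rewrite Ienum0.
case: z => [|c z].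
  rewrite IenumS mem_cat (negPf (nil_notin_burst_prefix _ _ _)) orbF.
  by apply/mapP/idP => [[]//|/size_Iset].
have [|] : c = a \/ c = ~~ a by case: (c); case: (a); auto.
  by move=> ->; rewrite mem_IenumS_cons IHx mem_Iset_cons.
move=> ->; apply/idP/idP => [|/(mem_IsetS_flip_cons _ _ _ _ b0) [w [u [Hw Hu ->]]]].
  rewrite IenumS mem_cat => /orP [/mapP [v _ []]|]; first by case: (a).
  case/mem_burst_prefix => w [u [Hw Hu [->]]].
  by apply/(mem_IsetS_flip_cons _ _ _ _ b0); exists w, u; rewrite -IHt.
by rewrite mem_IenumS_flip // IHt.
Qed.

Lemma uniq_Ienum b x t : uniq (Ienum b x t).
Proof.
elim: x t => [|a x IHx] t; first exact: uniq_words.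
elim: t => [|t IHt]; first by rewrite Ienum0.
rewrite IenumS cat_uniq (map_inj_uniq (@cons_inj _ a)) IHx uniq_burst_prefix // andbT.
by apply/hasPn => _ /mem_burst_prefix [w [u [_ _ ->]]]; apply/mapP => -[v _ []]; case: (a).
Qed.

Lemma sum_bin n : \sum_(i < n.+1) 'C(n, i) = 2 ^ n.
Proof.
rewrite -[2]/(1 + 1) expnDn; apply: eq_bigr => i _.
by rewrite !exp1n !muln1.
Qed.

Lemma sum_binS m k :
  \sum_(i < k.+1) 'C(m.+1, i) = \sum_(i < k.+1) 'C(m, i) + \sum_(i < k) 'C(m, i).
Proof.
rewrite big_ord_recl [in RHS]big_ord_recl !bin0 -addnA; congr (1 + _).
by rewrite -big_split; apply: eq_bigr => i _; rewrite binS.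
Qed.

Definition Inum (b n t : nat) : nat := 2 ^ (t * b.-1) * \sum_(i < t.+1) 'C(n + t, i).

Lemma Inum0 b n : Inum b n 0 = 1.
Proof. by rewrite /Inum big_ord1 addn0 bin0. Qed.

Lemma Inum_nil b t : 0 < b -> Inum b 0 t = 2 ^ (t * b).
Proof. by move=> b0; rewrite /Inum add0n sum_bin -expnD -mulnSr prednK. Qed.

Lemma InumS b n t : Inum b n.+1 t.+1 = Inum b n t.+1 + 2 ^ b.-1 * Inum b n.+1 t.
Proof.
by rewrite /Inum addSn sum_binS mulnDr addSnnS mulnA -expnD -mulSn.
Qed.

Lemma size_Ienum b x t : 0 < b -> size (Ienum b x t) = Inum b (size x) t.
Proof.
move=> b0; elim: x t => [|a x IHx] t; first by rewrite size_words Inum_nil.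
elim: t => [|t IHt]; first by rewrite Ienum0 Inum0.
by rewrite IenumS size_cat size_map size_burst_prefix IHx IHt InumS.
Qed.

Lemma count_mem_leq (T : eqType) (A B C : seq T) : uniq A ->
  (forall z, z \in A -> z \in B -> z \in C) -> count (mem B) A <= size C.
Proof.
move=> UA AB; rewrite -size_filter; apply: uniq_leq_size; first exact: filter_uniq.
by move=> z; rewrite mem_filter => /andP [/= Bz Az]; apply: AB.
Qed.

Lemma leq_count_mem (T : eqType) (A B C : seq T) : uniq C ->
  {subset C <= A} -> {subset C <= B} -> size C <= count (mem B) A.
Proof.
move=> UC CA CB; rewrite -size_filter; apply: uniq_leq_size => // z Cz.
by rewrite mem_filter /= CB ?CA.
Qed.

Lemma count_Ienum0 b x y : x != y -> count (mem (Ienum b y 0)) (Ienum b x 0) = 0.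
Proof. by move=> Hxy; rewrite !Ienum0 /= mem_seq1 (negPf Hxy). Qed.

Lemma count_IenumS_cons b a x y t :
  count (mem (Ienum b (a :: y) t.+1)) (Ienum b (a :: x) t.+1) =
  count (mem (Ienum b y t.+1)) (Ienum b x t.+1) +
  2 ^ b.-1 * count (mem (Ienum b (a :: y) t)) (Ienum b (a :: x) t).
Proof.
rewrite [Ienum b (a :: x) _]IenumS count_cat count_map.
congr (_ + _); first by apply: eq_count => z; apply: mem_IenumS_cons.
by apply: count_burst_prefix => w u Hw; apply: mem_IenumS_flip.
Qed.

Lemma expn_pred_double b : 0 < b -> 2 ^ b = 2 ^ b.-1 + 2 ^ b.-1.
Proof. by move=> b0; rewrite addnn -mul2n -expnS prednK. Qed.

Lemma count_IenumS_flip_leq b a x y t : 0 < b -> size x = size y ->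
  count (mem (Ienum b (~~ a :: y) t.+1)) (Ienum b (a :: x) t.+1) <=
  2 ^ b * Inum b (size x).+1 t.
Proof.
move=> b0 Hs; rewrite [Ienum b (a :: x) _]IenumS count_cat expn_pred_double // mulnDl.
apply: leq_add.
  have -> : 2 ^ b.-1 * Inum b (size x).+1 t =
            size (burst_prefix b a (Ienum b (~~ a :: y) t)).
    by rewrite size_burst_prefix size_Ienum // Hs.
  apply: count_mem_leq; first by rewrite (map_inj_uniq (@cons_inj _ a)) uniq_Ienum.
  move=> _ /mapP [z _ ->]; rewrite IenumS mem_cat negbK => /orP [/mapP [v _ []]|//].
  by case: (a).
by apply: leq_trans (count_size _ _) _; rewrite size_burst_prefix size_Ienum.
Qed.

Lemma count_Ienum_leq b x y t : 0 < b -> size x = size y -> x != y ->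
  count (mem (Ienum b y t.+1)) (Ienum b x t.+1) <= 2 ^ b * Inum b (size x) t.
Proof.
move=> b0; elim: x y t => [|a x IHx] [|a' y] t // [Hs].
have [<-|->] : a' = a \/ a' = ~~ a by case: (a'); case: (a); auto.
  move=> Hxy; have Nxy : x != y by move: Hxy; rewrite eqseq_cons eqxx.
  elim: t => [|t IHt]; rewrite count_IenumS_cons.
    rewrite count_Ienum0 // muln0 addn0 Inum0.
    by have := IHx y 0 Hs Nxy; rewrite !Inum0.
  rewrite /= InumS mulnDr mulnCA leq_add ?leq_mul2l ?IHt ?orbT //.
  exact: IHx.
by move=> _; exact: count_IenumS_flip_leq.
Qed.

Lemma burst_prefix_sub_IenumS b a x t : 0 < b ->
  {subset burst_prefix b (~~ a) (Ienum b (a :: x) t) <= Ienum b (~~ a :: x) t.+1}.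
Proof.
move=> b0 _ /mem_burst_prefix [w [u [Hw Hu ->]]].
by rewrite mem_IenumS_cons mem_Ienum //; apply: (cat_mem_IsetS_cons (a := a) b0 Hw); rewrite -mem_Ienum.
Qed.

(* Both halves [~a Sigma^(b-1) I_t(a x)] and [a Sigma^(b-1) I_t(~a x)] lie in
   [I_{t+1}(a x)] and in [I_{t+1}(~a x)]. *)
Lemma count_IenumS_flip_geq b a x t : 0 < b ->
  2 ^ b * Inum b (size x).+1 t <=
  count (mem (Ienum b (~~ a :: x) t.+1)) (Ienum b (a :: x) t.+1).
Proof.
move=> b0.
set P := burst_prefix b (~~ a) (Ienum b (a :: x) t).
set Q := burst_prefix b a (Ienum b (~~ a :: x) t).
have -> : 2 ^ b * Inum b (size x).+1 t = size (P ++ Q).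
  by rewrite size_cat !size_burst_prefix !size_Ienum // -mulnDl -expn_pred_double.
have subS := @burst_prefix_sub_IenumS b _ x t b0.
apply: leq_count_mem => [|z|z].
- rewrite cat_uniq !uniq_burst_prefix ?uniq_Ienum //= andbT.
  apply/hasPn => _ /mem_burst_prefix [w [u [_ _ ->]]].
  by apply/negP => /head_burst_prefix; case: (a).
- rewrite mem_cat => /orP [Hz|]; first by rewrite IenumS mem_cat Hz orbT.
  by rewrite /Q -{1 3}[a]negbK => /subS.
- rewrite mem_cat => /orP [/subS //|Hz].
  by rewrite IenumS mem_cat negbK Hz orbT.
Qed.

Lemma Icard_Inum t b x : 0 < b -> Icard t b x = Inum b (size x) t.
Proof.
move=> b0; rewrite /Icard -size_Ienum //; apply/perm_size/uniq_perm.
- exact: undup_uniq.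
- exact: uniq_Ienum.
- by move=> z; rewrite mem_undup mem_Ienum.
Qed.

Lemma Iinter_count t b x y : 0 < b ->
  Iinter t b x y = count (mem (Ienum b y t)) (Ienum b x t).
Proof.
move=> b0; rewrite /Iinter -size_filter; apply/perm_size/uniq_perm.
- exact: undup_uniq.
- exact/filter_uniq/uniq_Ienum.
- by move=> z; rewrite mem_undup !mem_filter /= !mem_Ienum.
Qed.

Lemma I2_Inum b n t : 0 < b -> I2 b n t = Inum b n t.
Proof.
move=> b0; apply/eqP; rewrite eqn_leq; apply/andP; split.
  by apply/bigmax_leqP => x _; rewrite Icard_Inum // size_tuple.
by apply: leq_trans (leq_bigmax (nseq_tuple n false)); rewrite Icard_Inum // size_tuple.
Qed.

Lemma N2plus_Inum b n t : 0 < b -> 0 < n -> N2plus b n t.+1 = 2 ^ b * Inum b n t.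
Proof.
move=> b0 n0; apply/eqP; rewrite eqn_leq; apply/andP; split.
  apply/bigmax_leqP => x _; apply/bigmax_leqP => y Nxy.
  have Es : size x = size y by rewrite !size_tuple.
  have := count_Ienum_leq t b0 Es Nxy.
  by rewrite Iinter_count // size_tuple.
have Ex : size (true :: nseq n.-1 false) == n by rewrite /= size_nseq prednK.
have Ey : size (false :: nseq n.-1 false) == n by rewrite /= size_nseq prednK.
apply: leq_trans (leq_bigmax (Tuple Ex)).
apply: leq_trans (leq_bigmax_cond (Tuple Ey) (isT : Tuple Ex != Tuple Ey)).
have := count_IenumS_flip_geq true (nseq n.-1 false) t b0.
by rewrite Iinter_count // size_nseq prednK.
Qed.

Theorem mainTheorem4 (n t b : nat) :
  1 <= n -> 1 <= t -> 1 <= b ->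
  N2plus b n t = 2 ^ b * I2 b n (t - 1) /\
  2 ^ b * I2 b n (t - 1) =
    2 ^ (t * (b - 1) + 1) * \sum_(i < t) 'C(n + t - 1, i).
Proof.
move=> n0 t0 b0; case: t t0 => [|t] // _.
rewrite subn1 /= I2_Inum // N2plus_Inum //; split => //.
by rewrite /Inum mulnA -expnD !subn1 addn1 mulSn -addSn prednK // addnS.
Qed.
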